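(* Let $\mathscr{X}$ be a totally bounded normed metric space with $\|x\|\le1$ for all $x$, consider the $\epsilon$-perturbation channel on $\mathscr{X}$ described in the context, let $0<\epsilon\le1$ and $0\le\delta<m_{\mathscr{Y}}(V_\epsilon)$. Then $$C^\delta_\epsilon=\sup\Big\{ I_{\tilde\delta/|[\![X]\!]|}(Y;X)\ :\ X \text{ a transmitted UV with } [\![X]\!]\subseteq\mathscr{X},\ 0\le\tilde\delta\le \delta/m_{\mathscr{Y}}([\![Y]\!])\Big\}\ \text{bits},$$ where $Y$ is the received UV corresponding to $X$.
   Context: Uncertain variables (UVs): a UV is a map $U$ from a sample space $\Omega$ to a set; jointly considered UVs share $\Omega$. $[\![U]\!]=\{U(\omega)\}$; $[\![U|w]\!]=\{U(\omega):W(\omega)=w\}$, $[\![U|W]\!]=\{[\![U|w]\!]:w\in[\![W]\!]\}$. An uncertainty function on a set $\mathscr{U}$ is a map $m$ on subsets of $\mathscr{U}$ with $m(\emptyset)=0$, $0<m(S)<\infty$ for nonempty $S$, $\max\{m(S_1),m(S_2)\}\le m(S_1\cup S_2)$. $\delta$-mutual information: for UVs $U$ (values in $\mathscr{U}$ with uncertainty function $m_{\mathscr{U}}$) and $W$, points $u,u'\in[\![U]\!]$ are $\delta$-connected via $[\![U|W]\!]$ if there are $w_1,\dots,w_N\in[\![W]\!]$ with $u\in[\![U|w_1]\!]$, $u'\in[\![U|w_N]\!]$, $m_{\mathscr{U}}([\![U|w_i]\!]\cap[\![U|w_{i-1}]\!])/m_{\mathscr{U}}([\![U]\!])>\delta$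 for $1<i\le N$; a set is $\delta$-connected if all pairs of its points are. A $\delta$-overlap family $[\![U|W]\!]^*_\delta$ is a family of distinct subsets covering $[\![U]\!]$, of largest cardinality among covering families such that (i) each member is $\delta$-connected and contains some $[\![U|w]\!]$; (ii) distinct members $S_1,S_2$ satisfy $m_{\mathscr{U}}(S_1\cap S_2)\le\delta\, m_{\mathscr{U}}([\![U]\!])$; (iii) each $[\![U|w]\!]$ lies in some member. $I_\delta(U;W)=\log_2|[\![U|W]\!]^*_\delta|$ if such a family exists, else $0$. Channel: the output space is $\mathscr{Y}=\mathscr{X}$; $m_{\mathscr{X}},m_{\mathscr{Y}}$ are uncertainty functions on $\mathscr{X},\mathscr{Y}$ with $m_{\mathscr{Y}}(\mathscr{Y})=1$. $S_\epsilon(x)=\{y\in\mathscr{Y}:\|x-y\|\le\epsilon\}$; $V_\epsilon=S_\epsilon(x^* )$ where $x^*$ minimizes $m_{\mathscr{Y}}(S_\epsilon(x))$ over $x\in\mathscr{X}$. A codebook is a discrete set $\mathcal{C}\subseteq\mathscr{X}$. $e_\epsilon(x_1,x_2)=m_{\mathscr{Y}}(S_\epsilon(x_1)\cap S_\epsilon(x_2))/m_{\mathscr{Y}}(\mathscr{Y})$. $\mathcal{C}$ is $(\epsilon,\delta)$-distinguishable if $e_\epsilon(x_1,x_2)\le\delta/|\mathcal{C}|$ for all distinct $x_1,x_2\in\mathcal{C}$; $C^\delta_\epsilon=\sup\log_2|\mathcal{C}|$ over $(\epsilon,\delta)$-distinguishable codebooks. For a codebook $\mathcal{C}$, the transmitted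 UV $X$ and received UV $Y$ satisfy $[\![X]\!]=\mathcal{C}$, $[\![Y]\!]=\bigcup_{x\in\mathcal{C}}S_\epsilon(x)$, $[\![Y|x]\!]=\{y\in[\![Y]\!]:\|x-y\|\le\epsilon\}$, $[\![X|y]\!]=\{x\in[\![X]\!]:\|x-y\|\le\epsilon\}$. *)

From HB Require Import structures.
From mathcomp Require Import all_boot all_order all_algebra.
From mathcomp Require Import all_classical all_reals all_analysis.
From mathcomp Require Import finmap.
Set Implicit Arguments. Unset Strict Implicit. Unset Printing Implicit Defensive.
Import Order.TTheory GRing.Theory Num.Theory.
Import numFieldNormedType.Exports.
Local Open Scope classical_set_scope.
Local Open Scope ring_scope.

Section Defs.
Variables (R : realType) (V : normedModType R).

Definition log2 (x : R) : R := ln x / ln 2.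

Definition totally_bounded_set (A : set V) : Prop :=
  forall e : R, 0 < e -> exists s : seq V,
    (forall x, x \in s -> A x) /\ A `<=` \bigcup_(x in [set x | x \in s]) ball x e.

Definition uncertainty_fn (D : set V) (m : set V -> R) : Prop :=
  [/\ m set0 = 0,
      (forall S, S `<=` D -> S !=set0 -> 0 < m S) &
      (forall S1 S2, S1 `<=` D -> S2 `<=` D ->
         Num.max (m S1) (m S2) <= m (S1 `|` S2))].

(** S_eps(x) = { y in Y : ||x - y|| <= eps } (with Y = X as sets) *)
Definition Sball (XX : set V) (eps : R) (x : V) : set V :=
  [set y | XX y /\ `|x - y| <= eps].

(** ** delta-mutual information I_delta(U;W), given
    UU = [[U]], WW = [[W]], cond w = [[U|w]], m = m_U *)
Section DeltaMI.
Variable W : Type.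
Variables (m : set V -> R) (UU : set V) (WW : set W) (cond : W -> set V).

Definition dconnected (d : R) (u u' : V) : Prop :=
  exists (N : nat) (w : nat -> W),
    [/\ (0 < N)%N, (forall i, (i < N)%N -> WW (w i)),
        cond (w 0%N) u, cond (w N.-1) u' &
        forall i, (0 < i < N)%N ->
          m (cond (w i) `&` cond (w i.-1)) / m UU > d].

Definition dconnected_set (d : R) (S : set V) : Prop :=
  forall u u', S u -> S u' -> dconnected d u u'.

Definition overlap_admissible (d : R) (F : set (set V)) : Prop :=
  [/\ (forall S, F S -> S `<=` UU),
      \bigcup_(S in F) S = UU,
      (forall S, F S -> dconnected_set d S /\ exists2 w, WW w & cond w `<=` S),
      (forall S1 S2, F S1 -> F S2 -> S1 <> S2 -> m (S1 `&` S2) <= d * m UU) &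
      (forall w, WW w -> exists2 S, F S & cond w `<=` S)].

Definition overlap_family (d : R) (F : set (set V)) : Prop :=
  [/\ overlap_admissible d F, finite_set F &
      forall G, overlap_admissible d G ->
        finite_set G /\ (#|` fset_set G| <= #|` fset_set F|)%fset%N].

Definition deltaMI (d : R) : R :=
  if `[< exists F, overlap_family d F >] then
    log2 (xget 0%N [set n | exists F, overlap_family d F /\ (#|` fset_set F|)%fset = n])%:R
  else 0.
End DeltaMI.

Definition received_range (XX : set V) (eps : R) (C : {fset V}) : set V :=
  \bigcup_(x in [set x | x \in C]) Sball XX eps x.

Definition Ygiven (XX : set V) (eps : R) (C : {fset V}) (x : V) : set V :=
  [set y | received_range XX eps C y /\ `|x - y| <= eps].

Definition codebook (XX : set V) (C : {fset V}) : Prop :=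
  C != fset0 /\ forall x, x \in C -> XX x.

Definition distinguishable (XX : set V) (mY : set V -> R) (eps delta : R)
    (C : {fset V}) : Prop :=
  forall x1 x2, x1 \in C -> x2 \in C -> x1 != x2 ->
    mY (Sball XX eps x1 `&` Sball XX eps x2) / mY XX <= delta / (#|` C|)%fset%:R.

Definition capacity (XX : set V) (mY : set V -> R) (eps delta : R) : \bar R :=
  ereal_sup [set (log2 (#|` C|)%fset%:R)%:E | C in
     [set C | codebook XX C /\ distinguishable XX mY eps delta C]].

(** I_dt(Y;X) for the transmitted UV with [[X]] = C *)
Definition channel_MI (XX : set V) (mY : set V -> R) (eps dt : R)
    (C : {fset V}) : R :=
  deltaMI mY (received_range XX eps C) [set x | x \in C]
    (Ygiven XX eps C) dt.

End Defs.

From HB Require Import structures.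
From mathcomp Require Import all_boot all_order all_algebra.
From mathcomp Require Import all_classical all_reals all_analysis.
From mathcomp Require Import finmap.
Set Implicit Arguments. Unset Strict Implicit. Unset Printing Implicit Defensive.
Import Order.TTheory GRing.Theory Num.Theory.
Import numFieldNormedType.Exports.
Local Open Scope classical_set_scope.
Local Open Scope ring_scope.

(* Any set of outputs that contains a whole ball S_eps(x) has uncertainty at
   least m(V_eps) > delta.  Hence, as long as the overlap threshold is at most
   delta / |C| in absolute terms, two distinct members of an admissible overlap
   family never contain the ball of a common codeword: choosing for each member
   a codeword whose ball it contains is injective, and the chosen codewords form
   an (eps, delta)-distinguishable codebook of the same size.  So every value
   of I is at most the capacity.  Conversely, for a distinguishable codebook C
   and the threshold delta / m([[Y]]), the balls around the codewords form a
   maximal overlap family of size |C|, so log2 |C| is attained. *)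

Section OverlapFamilies.
Variables (R : realType) (V : normedModType R) (W : Type).
Variables (m : set V -> R) (UU : set V) (WW : set W) (cond : W -> set V).

Lemma deltaMI_overlap_family d F :
  overlap_family m UU WW cond d F ->
  deltaMI m UU WW cond d = log2 (#|` fset_set F|)%fset%:R.
Proof.
move=> ofF; rewrite /deltaMI asboolT; last by exists F.
set P := (X in xget _ X).
have [G [[admG _ maxG] <-]] : P (xget 0%N P).
  by apply: xgetPex; exists #|` fset_set F|%fset, F.
case: ofF => admF _ maxF; congr (log2 _%:R); apply/eqP; rewrite eqn_leq.
by have [_ ->] := maxG _ admF; have [_ ->] := maxF _ admG.
Qed.

Lemma deltaMI_no_family d :
  ~ (exists F, overlap_family m UU WW cond d F) -> deltaMI m UU WW cond d = 0.
Proof. by move=> noF; rewrite /deltaMI asboolF. Qed.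

End OverlapFamilies.

Section Channel.
Variables (R : realType) (V : normedModType R).

Lemma uncertainty_fn_le (D : set V) (m : set V -> R) (A B : set V) :
  uncertainty_fn D m -> A `<=` B -> B `<=` D -> m A <= m B.
Proof.
move=> [_ _ mU] AB BD; have := mU A B (subset_trans AB BD) BD.
by rewrite (setUidr AB) ge_max => /andP[].
Qed.

Lemma ler_pdivn (a : R) (n : nat) : 0 <= a -> (0 < n)%N -> a / n%:R <= a.
Proof. by move=> a0 n0; rewrite ler_piMr // invf_le1 ?ltr0n // ler1n. Qed.

Variables (XX : set V) (mY : set V -> R) (eps delta : R) (xstar : V).
Hypotheses (mY_unc : uncertainty_fn XX mY) (mY_XX : mY XX = 1).
Hypotheses (XX_xstar : XX xstar)
  (xstar_min : forall x, XX x -> mY (Sball XX eps xstar) <= mY (Sball XX eps x)).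
Hypotheses (eps_gt0 : 0 < eps) (delta_ge0 : 0 <= delta)
  (delta_lt : delta < mY (Sball XX eps xstar)).

Lemma received_range_sub C : received_range XX eps C `<=` XX.
Proof. by move=> y [x _ []]. Qed.

Lemma Ygiven_Sball C x : x \in C -> Ygiven XX eps C x = Sball XX eps x.
Proof.
move=> xC; apply/seteqP; split=> y; first by move=> [[x0 _ [Xy _]] xy].
by move=> [Xy xy]; split=> //; exists x.
Qed.

Lemma received_range_gt0 C : codebook XX C -> 0 < mY (received_range XX eps C).
Proof.
move=> [/fset0Pn[x xC] CX]; case: mY_unc => _ mY_gt0 _.
apply: mY_gt0; first exact: received_range_sub.
by exists x, x => //; split; [exact: CX | rewrite subrr normr0 ltW].
Qed.

Lemma delta_lt_Sball_superset x S :
  XX x -> Sball XX eps x `<=` S -> S `<=` XX -> delta < mY S.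
Proof.
move=> Xx xS SX; apply: (lt_le_trans delta_lt).
exact: le_trans (xstar_min Xx) (uncertainty_fn_le mY_unc xS SX).
Qed.

Lemma capacity_ge0 : (0%:E <= capacity XX mY eps delta)%E.
Proof.
apply: le_ereal_sup_tmp; exists (log2 1)%:E; last by rewrite /log2 ln1 mul0r.
exists [fset xstar]%fset; last by rewrite cardfs1.
split; first split.
- by apply/fset0Pn; exists xstar; rewrite in_fset1.
- by move=> x; rewrite in_fset1 => /eqP ->.
- by move=> x1 x2; rewrite !in_fset1 => /eqP-> /eqP->; rewrite eqxx.
Qed.

Section AdmissibleFamily.
Variables (C : {fset V}) (d : R) (G : set (set V)).
Hypotheses (C_code : codebook XX C)
  (d_small : d * mY (received_range XX eps C) <= delta / (#|` C|)%fset%:R)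
  (G_adm : overlap_admissible mY (received_range XX eps C) [set` C]
     (Ygiven XX eps C) d G).

Lemma admissible_sub_range S : G S -> S `<=` XX.
Proof.
case: G_adm => G_sub _ _ _ _ GS.
by apply: subset_trans (G_sub _ GS) _; apply: received_range_sub.
Qed.

Lemma admissible_codeword S : G S -> exists2 x, x \in C & Sball XX eps x `<=` S.
Proof.
case: G_adm => _ _ G_conn _ _ /G_conn[_ [x xC]].
by rewrite Ygiven_Sball //; exists x.
Qed.

Lemma admissible_overlap_le S1 S2 : G S1 -> G S2 -> S1 <> S2 ->
  mY (S1 `&` S2) <= delta / (#|` C|)%fset%:R.
Proof.
by case: G_adm => _ _ _ G_disj _ G1 G2 /(G_disj _ _ G1 G2)/le_trans; apply.
Qed.

Lemma admissible_codeword_uniq x S1 S2 : x \in C -> G S1 -> G S2 ->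
  Sball XX eps x `<=` S1 -> Sball XX eps x `<=` S2 -> S1 = S2.
Proof.
move=> xC G1 G2 xS1 xS2; apply: contrapT => /(admissible_overlap_le G1 G2).
have C_gt0 : (0 < #|` C|)%fset%N by rewrite cardfs_gt0; case: C_code.
move=> /le_trans/(_ (ler_pdivn delta_ge0 C_gt0)); apply/negP; rewrite -ltNge.
apply: (delta_lt_Sball_superset (x := x)); first by case: C_code => _; apply.
  by move=> y xy; split; [exact: xS1 | exact: xS2].
by move=> y [S1y _]; exact: admissible_sub_range G1 _ S1y.
Qed.

Lemma admissible_selector : exists2 f : set V -> V,
  (forall S, G S -> f S \in C /\ Sball XX eps (f S) `<=` S) & set_inj G f.
Proof.
have [f fP] : {f : set V -> V &
    forall S, G S -> f S \in C /\ Sball XX eps (f S) `<=` S}.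
  apply: (@choice _ _ (fun S x => G S -> x \in C /\ Sball XX eps x `<=` S)) => S.
  have [/admissible_codeword[x xC xS]|nGS] := pselect (G S); last by exists xstar.
  by exists x.
exists f => // S1 S2; rewrite !in_setE => G1 G2 f12.
have [f1C f1S1] := fP _ G1; have [_] := fP _ G2; rewrite -f12.
exact: admissible_codeword_uniq f1C G1 G2 f1S1.
Qed.

Lemma admissible_sub_codebook : finite_set G /\ exists C' : {fset V},
  [/\ (C' `<=` C)%fset, #|` C'|%fset = #|` fset_set G|%fset &
      distinguishable XX mY eps delta C'].
Proof.
have [f fP f_inj] := admissible_selector.
have G_fin : finite_set G.
  apply: (card_le_finite _ (finite_fset C)); apply/pcard_leP/injfunPex.
  by exists f => // S /fP[].
split=> //; set C' := (f @` fset_set G)%fset.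
have C'_sub : (C' `<=` C)%fset.
  apply/fsubsetP => x /imfsetP[S /=].
  by rewrite in_fset_set // in_setE => /fP[? _] ->.
exists C'; split=> //.
  apply/eqP/card_in_imfsetP => S1 S2; rewrite !in_fset_set //.
  by move=> G1 G2; apply: f_inj.
move=> _ _ /imfsetP[S1 /= + ->] /imfsetP[S2 /= + ->].
rewrite !in_fset_set // !in_setE => G1 G2 f12.
have S12 : S1 <> S2 by move=> e; rewrite e eqxx in f12.
have C'_gt0 : (0 < #|` C'|)%fset%N.
  rewrite cardfs_gt0; apply/fset0Pn; exists (f S1); apply/imfsetP.
  by exists S1; rewrite // in_fset_set // in_setE.
have [_ fS1] := fP _ G1; have [_ fS2] := fP _ G2.
rewrite mY_XX divr1.
apply: le_trans _ (le_trans (admissible_overlap_le G1 G2 S12) _).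
- apply: uncertainty_fn_le mY_unc _ _; first by move=> y [/fS1 ? /fS2].
  by move=> y [S1y _]; exact: admissible_sub_range G1 _ S1y.
- apply: ler_wpM2l => //; rewrite lef_pV2 ?posrE ?ltr0n ?ler_nat //.
  + exact: fsubset_leq_card.
  + exact: leq_trans C'_gt0 (fsubset_leq_card C'_sub).
Qed.

End AdmissibleFamily.

Lemma log2_card_le_capacity C :
  (forall x, x \in C -> XX x) -> distinguishable XX mY eps delta C ->
  ((log2 (#|` C|)%fset%:R)%:E <= capacity XX mY eps delta)%E.
Proof.
move=> CX C_dist; have [C0|C_gt0] := posnP #|` C|%fset.
  by rewrite C0 /log2 ln0 ?mul0r //; exact: capacity_ge0.
apply: ereal_sup_ubound; exists C => //.
by split=> //; split=> //; rewrite -cardfs_gt0.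
Qed.

Lemma channel_MI_le_capacity C dt : codebook XX C -> 0 <= dt ->
  dt <= delta / mY (received_range XX eps C) ->
  ((channel_MI XX mY eps (dt / (#|` C|)%fset%:R) C)%:E
     <= capacity XX mY eps delta)%E.
Proof.
move=> C_code dt_ge0 dt_le; rewrite /channel_MI.
have [[F ofF]|noF] := pselect (exists F, overlap_family mY (received_range XX eps C)
   [set` C] (Ygiven XX eps C) (dt / (#|` C|)%fset%:R) F); last first.
  by rewrite deltaMI_no_family //; exact: capacity_ge0.
have m_gt0 := received_range_gt0 C_code.
have d_small : dt / (#|` C|)%fset%:R * mY (received_range XX eps C)
    <= delta / (#|` C|)%fset%:R.
  by rewrite mulrAC ler_wpM2r ?invr_ge0 // -ler_pdivlMr.
rewrite (deltaMI_overlap_family ofF); case: (ofF) => F_adm _ _.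
have [_ [C' [C'_sub <- C'_dist]]] := admissible_sub_codebook C_code d_small F_adm.
apply: log2_card_le_capacity C'_dist.
by move=> x /(fsubsetP C'_sub); case: C_code => _; apply.
Qed.

Section DistinguishableCodebook.
Variable C : {fset V}.
Hypotheses (C_code : codebook XX C) (C_dist : distinguishable XX mY eps delta C).

Definition codeword_family : set (set V) := Ygiven XX eps C @` [set` C].

Lemma Sball_inj : {in C &, injective (Sball XX eps)}.
Proof.
move=> x1 x2 x1C x2C e; apply/eqP; apply: contraT => x12.
have := C_dist x1C x2C x12; rewrite -e setIid mY_XX divr1 leNgt => /negP[].
have C_gt0 : (0 < #|` C|)%fset%N by rewrite cardfs_gt0; case: C_code.
apply: le_lt_trans (ler_pdivn delta_ge0 C_gt0) _.
apply: (delta_lt_Sball_superset (x := x1)) => //; first by case: C_code => _; apply.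
by move=> y [].
Qed.

Local Notation m_C := (mY (received_range XX eps C)).
Local Notation d_C := (delta / m_C / (#|` C|)%fset%:R).

Lemma codeword_family_admissible : overlap_admissible mY (received_range XX eps C)
  [set` C] (Ygiven XX eps C) d_C codeword_family.
Proof.
have m_gt0 := received_range_gt0 C_code.
split.
- by move=> _ [x xC <-] y [].
- apply/seteqP; split=> [y [_ [x xC <-] []] //|y Cy].
  by have [x xC [Xy xy]] := Cy; exists (Ygiven XX eps C x); [exists x | split].
- move=> _ [x xC <-]; split; last by exists x.
  move=> u u' xu xu'; exists 1%N, (fun=> x); split=> //.
  by move=> [|[]].
- move=> _ _ [x1 x1C <-] [x2 x2C <-] x12.
  rewrite mulrAC divfK ?gt_eqF // !Ygiven_Sball //.
  have := C_dist x1C x2C; rewrite mY_XX divr1; apply.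
  by apply: contra_notN x12 => /eqP ->.
- by move=> x xC; exists (Ygiven XX eps C x) => //; exists x.
Qed.

Lemma card_codeword_family : #|` fset_set codeword_family|%fset = #|` C|%fset.
Proof.
rewrite fset_set_image ?finite_fset // set_fsetK.
apply/eqP/card_in_imfsetP => x1 x2 x1C x2C.
by rewrite !Ygiven_Sball //; apply: Sball_inj.
Qed.

Lemma codeword_family_overlap : overlap_family mY (received_range XX eps C)
  [set` C] (Ygiven XX eps C) d_C codeword_family.
Proof.
split; [exact: codeword_family_admissible | exact/finite_image/finite_fset |].
move=> G G_adm; have d_small : d_C * m_C <= delta / (#|` C|)%fset%:R.
  by rewrite mulrAC divfK ?gt_eqF ?received_range_gt0.
have [G_fin [C' [C'_sub <- _]]] := admissible_sub_codebook C_code d_small G_adm.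
by split=> //; rewrite card_codeword_family fsubset_leq_card.
Qed.

Lemma channel_MI_distinguishable :
  channel_MI XX mY eps d_C C = log2 (#|` C|)%fset%:R.
Proof.
rewrite /channel_MI (deltaMI_overlap_family codeword_family_overlap).
by rewrite card_codeword_family.
Qed.

End DistinguishableCodebook.

Definition channel_MI_values : set (\bar R) :=
  [set (channel_MI XX mY eps (p.2 / (#|` p.1|)%fset%:R) p.1)%:E | p in
     [set p : {fset V} * R | codebook XX p.1 /\
        0 <= p.2 /\ p.2 <= delta / mY (received_range XX eps p.1)]].

Lemma capacity_le_sup_channel_MI :
  (capacity XX mY eps delta <= ereal_sup channel_MI_values)%E.
Proof.
apply: ge_ereal_sup => _ [C [C_code C_dist] <-]; apply: ereal_sup_ubound.
exists (C, delta / mY (received_range XX eps C)).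
  by split=> //; split=> //; rewrite divr_ge0 // ltW // received_range_gt0.
by rewrite /= channel_MI_distinguishable.
Qed.

Lemma sup_channel_MI_le_capacity :
  (ereal_sup channel_MI_values <= capacity XX mY eps delta)%E.
Proof.
apply: ge_ereal_sup => _ [[C dt] /= [C_code [dt_ge0 dt_le]] <-].
exact: channel_MI_le_capacity.
Qed.

End Channel.

Theorem theorem5 (R : realType) (V : normedModType R) (XX : set V)
    (mY : set V -> R) (eps delta : R) (xstar : V) :
  totally_bounded_set XX ->
  (forall x, XX x -> `|x| <= 1) ->
  uncertainty_fn XX mY -> mY XX = 1 ->
  XX xstar -> (forall x, XX x -> mY (Sball XX eps xstar) <= mY (Sball XX eps x)) ->
  0 < eps -> eps <= 1 ->
  0 <= delta -> delta < mY (Sball XX eps xstar) ->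
  capacity XX mY eps delta =
  ereal_sup [set (channel_MI XX mY eps (p.2 / (#|` p.1|)%fset%:R) p.1)%:E | p in
     [set p : {fset V} * R | codebook XX p.1 /\
        0 <= p.2 /\ p.2 <= delta / mY (received_range XX eps p.1)]].
Proof.
move=> _ _ mY_unc mY_XX XX_xstar xstar_min eps_gt0 _ delta_ge0 delta_lt.
apply: le_anti; apply/andP; split.
- exact: capacity_le_sup_channel_MI
    mY_unc mY_XX xstar_min eps_gt0 delta_ge0 delta_lt.
- exact: sup_channel_MI_le_capacity
    mY_unc mY_XX XX_xstar xstar_min eps_gt0 delta_ge0 delta_lt.
Qed.
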